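(* Let $q$ be a prime power, $m$ a positive integer, $n=q^m-1$, and $\delta$ an integer with $2\le\delta\le q^{\lceil m/2\rceil}+1$ (and $\delta\le n$). Then the primitive, narrow-sense BCH code $\mathcal{BCH}(n,q;\delta)$ over $\mathbf{F}_q$ has dimension $$k=q^m-1-m\left\lceil(\delta-1)(1-1/q)\right\rceil.$$
   Context: Let $\alpha$ be a primitive element of $\mathbf{F}_{q^m}$ and $n=q^m-1$; $C_x=\{xq^k\bmod n\mid k\in\mathbf{Z}\}$ is the $q$-ary cyclotomic coset of $x$ modulo $n$. For $2\le\delta\le n$, $\mathcal{BCH}(n,q;\delta)$ is the cyclic code of length $n$ over $\mathbf{F}_q$ with generator polynomial $\prod_{z\in Z}(x-\alpha^z)$, where $Z=C_1\cup\cdots\cup C_{\delta-1}$. *)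

From HB Require Import structures.
From mathcomp Require Import all_boot all_order all_algebra all_field.
Set Implicit Arguments. Unset Strict Implicit. Unset Printing Implicit Defensive.
Import GRing.Theory.
Local Open Scope ring_scope.

Definition ceil_div (a b : nat) : nat := ((a + b.-1) %/ b)%N.

(* Z = C_1 U ... U C_{delta-1}, as the (duplicate-free) list of residues z < n
   with z = x * q^k mod n for some 1 <= x <= delta-1 and some k.
   Since q^m = 1 mod n, it suffices to take 0 <= k < m. *)
Definition bch_Z (q m n delta : nat) : seq nat :=
  [seq z <- iota 0 n |
     [exists x : 'I_delta, exists k : 'I_m,
        (0 < (x : nat))%N && (z == (x * q ^ k) %% n)%N]].

Definition bch_gen (L : fieldType) (alpha : L) (q m n delta : nat) : {poly L} :=
  \prod_(z <- bch_Z q m n delta) ('X - (alpha ^+ z)%:P).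

Definition bch_word (F : finFieldType) (L : fieldExtType F) (alpha : L)
    (q m n delta : nat) (c : 'rV[F]_n) : bool :=
  bch_gen alpha q m n delta %| map_poly (GRing.in_alg L) (\sum_(i < n) (c 0 i)%:P * 'X^i).

Definition BCH (F : finFieldType) (L : fieldExtType F) (alpha : L)
    (q m n delta : nat) : {vspace 'rV[F]_n} :=
  <<[seq c <- enum [set: 'rV[F]_n] | @bch_word F L alpha q m n delta c]>>%VS.

(* Multiplication by q permutes Z modulo n, so the Frobenius map x |-> x ^+ q
   fixes the generator polynomial and its coefficients lie in F; the code is
   then the space of multiples of a polynomial of degree |Z| over F, whose
   dimension is n - |Z|.  Every x in [1, delta-1] is y q^e with q not dividing
   y, so Z is the union of the cosets C_y of these y.  Since
   delta - 1 <= q^(ceil(m/2)), a nontrivial cyclic shift of the base-q digits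
   of such a y is either a multiple of q or at least q^(ceil(m/2)); hence the
   cosets are pairwise disjoint and of size m, and
   |Z| = m (delta-1 - floor((delta-1)/q)) = m ceil((delta-1)(1-1/q)). *)

From HB Require Import structures.
From mathcomp Require Import all_boot all_order all_algebra all_field.
From mathcomp Require Import zify.

Lemma modn_mul_expn (q m x : nat) : 0 < q -> x * q ^ m = x %[mod q ^ m - 1].
Proof.
move=> q_gt0; have {1}-> : q ^ m = (q ^ m - 1).+1 by rewrite subn1 prednK ?expn_gt0 ?q_gt0.
by rewrite mulnS addnC modnMDl.
Qed.

Lemma modn_mul_expn_mod (q m x k : nat) : 0 < q ->
  x * q ^ k = x * q ^ (k %% m) %[mod q ^ m - 1].
Proof.
move=> q_gt0; rewrite {1}(divn_eq k m); elim: (k %/ m) => [|t IHt] /=.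
  by rewrite mul0n add0n.
by rewrite mulSn -addnA expnD mulnCA mulnC modn_mul_expn.
Qed.

Lemma modn_rotate (P Q a b : nat) : a < Q -> b < P -> b * Q + a < P * Q - 1 ->
  (b * Q + a) * P %% (P * Q - 1) = b + a * P.
Proof.
move=> aQ bP x_lt.
have small : b + a * P < P * Q - 1 by nia.
have -> : (b * Q + a) * P = b * (P * Q - 1) + (b + a * P) by nia.
by rewrite modnMDl modn_small.
Qed.

Lemma ceil_div_mul_subn1 (D q : nat) : 0 < q -> ceil_div (D * (q - 1)) q = D - D %/ q.
Proof. by rewrite /ceil_div => q_gt0; nia. Qed.

Lemma rotation_dvdn_or_ge {q m x j : nat} : 1 < q -> x < q ^ uphalf m ->
  ~~ (q %| x) -> x < q ^ m - 1 -> 0 < j < m ->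
  (q %| x * q ^ j %% (q ^ m - 1)) || (q ^ uphalf m <= x * q ^ j %% (q ^ m - 1)).
Proof.
move=> q_gt1 x_small q_ndvd_x x_lt_n /andP[j_gt0 j_lt_m].
have h2 : (uphalf m).*2 <= m.+1 by rewrite -geq_uphalf_double.
have qX_gt0 k : 0 < q ^ k by rewrite expn_gt0 ltnW.
set r := m - j; have r_gt0 : 0 < r by rewrite subn_gt0.
have qm : q ^ m = q ^ j * q ^ r by rewrite -expnD subnKC // ltnW.
have b_lt : x %/ q ^ r < q ^ j by rewrite ltn_divLR // -qm; lia.
have a_lt : x %% q ^ r < q ^ r by rewrite ltn_mod.
move: x_small q_ndvd_x x_lt_n; rewrite (divn_eq x (q ^ r)) qm.
move: (x %/ q ^ r) (x %% q ^ r) b_lt a_lt => b a b_lt a_lt x_small q_ndvd_x x_lt_n.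
rewrite modn_rotate //; have [-> | b_gt0] := posnP b.
  by rewrite add0n dvdn_mull // dvdn_exp.
have a_gt0 : 0 < a.
  rewrite lt0n; apply: contra q_ndvd_x => /eqP ->.
  by rewrite addn0 dvdn_mull // dvdn_exp.
have r_lt_h : r < uphalf m by rewrite -(ltn_exp2l _ _ q_gt1); nia.
have : q ^ uphalf m <= q ^ j by rewrite leq_exp2l // /r in r_lt_h *; lia.
by move=> ?; apply/orP; right; nia.
Qed.

Lemma expn_ndvdn_factor {q x : nat} : 1 < q -> 0 < x ->
  exists e y, x = y * q ^ e /\ ~~ (q %| y).
Proof.
move=> q_gt1; elim/ltn_ind: x => x IHx x_gt0.
have [q_dvd_x | q_ndvd_x] := boolP (q %| x); last by exists 0, x; rewrite expn0 muln1.
have xq_gt0 : 0 < x %/ q by rewrite divn_gt0 ?(ltnW q_gt1) // dvdn_leq.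
have [e [y [xqE q_ndvd_y]]] := IHx _ (ltn_Pdiv q_gt1 x_gt0) xq_gt0.
by exists e.+1, y; rewrite expnSr mulnA -xqE divnK.
Qed.

Definition qfree_upto (q D : nat) : seq nat := [seq x <- iota 1 D | ~~ (q %| x)].

Lemma size_qfree_upto (q D : nat) : 0 < q -> size (qfree_upto q D) = D - D %/ q.
Proof.
move=> q_gt0; rewrite size_filter; elim: D => [|D IHD]; first by rewrite div0n.
rewrite -(addn1 D) iotaD count_cat IHD /= addn0 add1n addn1 (divnS _ q_gt0).
have D_ge : D %/ q <= D := leq_div D q.
by case: (q %| D.+1); rewrite /= ?add1n ?addn0 ?subSS // add0n addn1 subSn.
Qed.

Section CyclotomicCosets.

Variables q m delta : nat.
Hypotheses (q_gt1 : 1 < q) (m_gt0 : 0 < m).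
Hypotheses (delta_small : delta <= q ^ uphalf m + 1) (delta_le_n : delta <= q ^ m - 1).

Local Notation n := (q ^ m - 1).
Local Notation Z := (bch_Z q m n delta).
Local Notation S := (qfree_upto q (delta - 1)).

Let q_gt0 : 0 < q. Proof. exact: ltnW. Qed.
Let n_gt0 : 0 < n. Proof. by rewrite subn_gt0 -{1}(expn0 q) ltn_exp2l. Qed.

Lemma uniq_bch_Z : uniq Z. Proof. by rewrite filter_uniq ?iota_uniq. Qed.

Lemma bch_Z_mulq_perm : perm_eq [seq z * q %% n | z <- Z] Z.
Proof.
have Z_lt_n z : z \in Z -> z < n by rewrite mem_filter mem_iota => /and3P[].
have mulq_inj : {in Z &, injective (fun z => z * q %% n)}.
  move=> z1 z2 Zz1 Zz2 /(congr1 (fun y => y * q ^ m.-1 %% n)) /=.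
  rewrite !modnMml -!mulnA -!expnS prednK // !modn_mul_expn //.
  by rewrite !modn_small ?Z_lt_n.
have mulq_sub : {subset [seq z * q %% n | z <- Z] <= Z}.
  move=> _ /mapP[z + ->]; rewrite !mem_filter !mem_iota /= ltn_pmod // andbT.
  case/andP=> /existsP[x /existsP[k /andP[x_gt0 /eqP ->]]] _.
  apply/existsP; exists x; apply/existsP; exists (Ordinal (ltn_pmod k.+1 m_gt0)).
  by rewrite x_gt0 /= modnMml -mulnA -expnSr modn_mul_expn_mod.
have uniq_mulq : uniq [seq z * q %% n | z <- Z].
  by rewrite map_inj_in_uniq // uniq_bch_Z.
have [_ eq_mulq] := uniq_min_size uniq_mulq mulq_sub (eq_leq (esym (size_map _ _))).
by apply: uniq_perm; rewrite ?uniq_mulq ?uniq_bch_Z.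
Qed.

Lemma qfree_upto_bounds {x} :
  x \in S -> [/\ 0 < x, x < delta, x < q ^ uphalf m & ~~ (q %| x)].
Proof.
rewrite mem_filter mem_iota => /andP[q_ndvd_x /andP[x_gt0 x_lt]].
have x_le : x <= q ^ uphalf m by lia.
split=> //; first by lia.
rewrite ltn_neqAle x_le andbT; apply: contraNneq q_ndvd_x => ->.
by rewrite dvdn_exp // uphalf_gt0.
Qed.

Lemma rotation_injective {x x' j j'} : x \in S -> x' \in S -> j < m -> j' < m ->
  x * q ^ j %% n = x' * q ^ j' %% n -> x = x' /\ j = j'.
Proof.
wlog le_j'j : x x' j j' / j' <= j.
  move=> IH Sx Sx' j_lt j'_lt E; have [le | /ltnW le] := leqP j' j; first exact: IH.
  by have [-> ->] := IH x' x j' j le Sx' Sx j'_lt j_lt (esym E).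
move=> Sx Sx' j_lt j'_lt E.
have [_ x_lt x_small q_ndvd_x] := qfree_upto_bounds Sx.
have [_ x'_lt x'_small q_ndvd_x'] := qfree_upto_bounds Sx'.
have x_lt_n : x < n := leq_trans x_lt delta_le_n.
have x'_lt_n : x' < n := leq_trans x'_lt delta_le_n.
have xE : x = x' * q ^ (j' + (m - j)) %% n.
  have := congr1 (fun y => y * q ^ (m - j) %% n) E.
  by rewrite /= !modnMml -!mulnA -!expnD subnKC ?(ltnW j_lt) // modn_mul_expn // modn_small.
have [lt_m | ge_m] := ltnP (j' + (m - j)) m.
  have : 0 < j' + (m - j) < m by rewrite lt_m addn_gt0 subn_gt0 j_lt orbT.
  move/(rotation_dvdn_or_ge q_gt1 x'_small q_ndvd_x' x'_lt_n).
  by rewrite -xE (negbTE q_ndvd_x) leqNgt x_small.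
have j_eq : j = j' by lia.
by move: xE; rewrite j_eq subnKC ?(ltnW j'_lt) // modn_mul_expn // modn_small.
Qed.

Lemma bch_Z_rotations : perm_eq Z [seq x * q ^ k %% n | x <- S, k <- iota 0 m].
Proof.
apply: uniq_perm; first exact: uniq_bch_Z.
  apply: allpairs_uniq; rewrite ?filter_uniq ?iota_uniq //.
  move=> _ _ /allpairsP[[x j] [/= Sx + ->]] /allpairsP[[x' j'] [/= Sx' + ->]].
  rewrite !mem_iota !add0n => /andP[_ j_lt] /andP[_ j'_lt] /= E.
  by have [-> ->] := rotation_injective Sx Sx' j_lt j'_lt E.
move=> z; rewrite mem_filter mem_iota /=; apply/idP/allpairsP.
- case/andP=> /existsP[x /existsP[k /andP[x_gt0 /eqP ->]]] _.
  have [e [y [xE q_ndvd_y]]] := expn_ndvdn_factor q_gt1 x_gt0.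
  have y_le_x : y <= x by rewrite xE leq_pmulr ?expn_gt0 ?q_gt0.
  have y_gt0 : 0 < y by move: x_gt0; rewrite xE; case: (y).
  exists (y, (e + k) %% m); split => /=.
  + by rewrite mem_filter q_ndvd_y mem_iota y_gt0; have := ltn_ord x; lia.
  + by rewrite mem_iota ltn_pmod.
  + by rewrite xE -mulnA -expnD modn_mul_expn_mod.
- case=> [[x k] [/= Sx + ->]]; rewrite mem_iota add0n => /andP[_ k_lt].
  have [x_gt0 x_lt _ _] := qfree_upto_bounds Sx.
  rewrite ltn_pmod // andbT; apply/existsP; exists (Ordinal x_lt).
  by apply/existsP; exists (Ordinal k_lt); rewrite x_gt0 eqxx.
Qed.

Lemma size_bch_Z : size Z = m * ceil_div ((delta - 1) * (q - 1)) q.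
Proof.
rewrite (perm_size bch_Z_rotations) size_allpairs size_iota size_qfree_upto //.
by rewrite ceil_div_mul_subn1 // mulnC.
Qed.

End CyclotomicCosets.

Import GRing.Theory.
Local Open Scope ring_scope.

Section FiniteFrobenius.

Variables (F : finFieldType) (L : fieldExtType F).

Definition frobenius_card (x : L) : L := x ^+ #|F|.

Lemma pchar_pnat_card : [pchar L].-nat #|F|.
Proof.
have [p p_pr pcharFp] := finPcharP F.
rewrite (card_pprimeChar pcharFp) pnatX orbC (eq_pnat _ (pchar_lalg L)).
by rewrite (eq_pnat _ (pcharf_eq pcharFp)) pnat_id ?orbT.
Qed.

Lemma frobenius_card_is_nmod_morphism : nmod_morphism frobenius_card.
Proof.
split=> [|x y]; rewrite /frobenius_card ?exprDn_pchar ?pchar_pnat_card //.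
by rewrite expr0n gtn_eqF // ltnW // finNzRing_gt1.
Qed.

Lemma frobenius_card_is_monoid_morphism : monoid_morphism frobenius_card.
Proof. by split=> [|x y]; rewrite /frobenius_card ?expr1n ?exprMn. Qed.

HB.instance Definition _ := GRing.isNmodMorphism.Build L L frobenius_card
  frobenius_card_is_nmod_morphism.
HB.instance Definition _ := GRing.isMonoidMorphism.Build L L frobenius_card
  frobenius_card_is_monoid_morphism.

Lemma polyOver1_frobenius_fixed (p : {poly L}) :
  map_poly frobenius_card p = p -> p \is a polyOver 1%VS.
Proof.
move=> fix_p; apply/polyOverP => i.
by rewrite Fermat's_little_theorem dimv1 expn1 -{2}fix_p coef_map.
Qed.

Lemma prod_XsubC_expr_polyOver1 (alpha : L) (n : nat) (Z : seq nat) :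
  alpha ^+ n = 1 -> perm_eq [seq z * #|F| %% n | z <- Z]%N Z ->
  \prod_(z <- Z) ('X - (alpha ^+ z)%:P) \is a polyOver 1%VS.
Proof.
move=> alpha_n permZ; apply: polyOver1_frobenius_fixed.
rewrite rmorph_prod -[RHS](perm_big _ permZ) big_map; apply: eq_bigr => z _.
by rewrite /= map_polyXsubC expr_mod // exprM.
Qed.

End FiniteFrobenius.

Lemma size_rVpoly {R : nzSemiRingType} {d : nat} (v : 'rV[R]_d) :
  (size (rVpoly v) <= d)%N.
Proof. exact: size_poly. Qed.

Section PolynomialMultiples.

Variables (F : finFieldType) (n : nat) (g : {poly F}).
Hypotheses (g_neq0 : g != 0) (size_g : (size g <= n.+1)%N).

Local Notation k := (n - (size g).-1)%N.

Definition mul_rVpoly (h : 'rV[F]_k) : 'rV[F]_n := poly_rV (g * rVpoly h).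

Lemma mul_rVpoly_is_semilinear : semilinear mul_rVpoly.
Proof.
split=> [a u | u v]; rewrite /mul_rVpoly.
  by rewrite linearZ /= -scalerAr linearZ.
by rewrite linearD /= mulrDr linearD.
Qed.

HB.instance Definition _ := GRing.isSemilinear.Build F _ _ _ mul_rVpoly
  mul_rVpoly_is_semilinear.

Lemma size_mul_rVpoly (h : 'rV[F]_k) : (size (g * rVpoly h)%R <= n)%N.
Proof.
apply: leq_trans (size_polyMleq _ _) _.
have := size_rVpoly h; lia.
Qed.

Lemma multiples_span_eq :
  <<[seq c <- enum [set: 'rV[F]_n] | g %| rVpoly c]>>%VS = (linfun mul_rVpoly @: fullv)%VS.
Proof.
apply/eqP; rewrite eqEsubv; apply/andP; split.
- apply/span_subvP => c; rewrite mem_filter => /andP[g_dvd_c _].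
  apply/memv_imgP; exists (poly_rV (rVpoly c %/ g)); first exact: memvf.
  rewrite lfunE /= /mul_rVpoly poly_rV_K; first by rewrite mulrC divpK // rVpolyK.
  rewrite size_divp // -subn1 leq_subLR subnKC; first exact: size_rVpoly.
  by rewrite leq_subLR add1n.
- apply/subvP => _ /memv_imgP[h _ ->]; apply: memv_span.
  by rewrite mem_filter mem_enum in_setT andbT lfunE /= /mul_rVpoly poly_rV_K ?size_mul_rVpoly // dvdp_mulIl.
Qed.

Lemma dim_multiples :
  \dim <<[seq c <- enum [set: 'rV[F]_n] | g %| rVpoly c]>> = k.
Proof.
have inj : lker (linfun mul_rVpoly) == 0%VS.
  apply/lker0P => u v; rewrite !lfunE /= /mul_rVpoly => /(congr1 rVpoly).
  by rewrite !poly_rV_K ?size_mul_rVpoly // => /(mulfI g_neq0)/(can_inj rVpolyK).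
rewrite multiples_span_eq limg_dim_eq; last by rewrite (eqP inj) capv0.
by rewrite dimvf dim_matrix mul1r.
Qed.

End PolynomialMultiples.

Lemma bch_word_dvdp {F : finFieldType} {L : fieldExtType F} {alpha : L}
    {q m n delta : nat} {g0 : {poly F}} :
  bch_gen alpha q m n delta = map_poly (in_alg L) g0 ->
  @bch_word F L alpha q m n delta =1 (fun c => g0 %| rVpoly c).
Proof.
move=> gE c; rewrite /bch_word gE dvdp_map /rVpoly poly_def.
by congr (_ %| _); apply: eq_bigr => i _; rewrite valK mul_polyC.
Qed.

Theorem mainTheorem6 (F : finFieldType) (L : fieldExtType F) (q m : nat)
  (alpha : L) (delta : nat) :
  #|F| = q ->
  (0 < m)%N ->
  \dim {: L} = m ->
  (q ^ m - 1).-primitive_root alpha ->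
  (2 <= delta)%N ->
  (delta <= q ^ uphalf m + 1)%N ->
  (delta <= q ^ m - 1)%N ->
  \dim (BCH alpha q m (q ^ m - 1) delta)
    = (q ^ m - 1 - m * ceil_div ((delta - 1) * (q - 1)) q)%N.
Proof.
move=> cardF m_gt0 _ prim _ delta_small delta_le_n.
have q_gt1 : (1 < q)%N by rewrite -cardF finNzRing_gt1.
set Z := bch_Z q m (q ^ m - 1) delta.
have /polyOver1P[g0 gE] : bch_gen alpha q m (q ^ m - 1) delta \is a polyOver 1%VS.
  apply: prod_XsubC_expr_polyOver1 (prim_expr_order prim) _.
  by rewrite cardF; exact: bch_Z_mulq_perm.
have size_g0 : size g0 = (size Z).+1.
  by rewrite -(size_map_poly (in_alg L)) -gE size_prod_XsubC.
have size_Z_le : (size Z <= q ^ m - 1)%N.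
  by rewrite size_filter (leq_trans (count_size _ _)) ?size_iota.
rewrite /BCH (eq_filter (bch_word_dvdp gE)) dim_multiples ?size_g0 //=.
  by rewrite size_bch_Z.
by rewrite -size_poly_gt0 size_g0.
Qed.
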